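(* Let $a,b,k,l$ be pairwise distinct complex parameters and $J,J'$ commuting constant $N\times N$ matrices. Let $H_{xy}$ ($x\neq y$) be $N\times N$ matrix functions of variables $\xi^J_k,\xi^{J'}_l$ satisfying $$\partial^J_kH_{xy}=\frac{J}{k-x}H_{xy}-H_{xy}\frac{J}{k-y}+H_{xk}JH_{ky},\qquad \partial^{J'}_lH_{xy}=\frac{J'}{l-x}H_{xy}-H_{xy}\frac{J'}{l-y}+H_{xl}J'H_{ly}$$ for all relevant pairwise distinct labels. Then the system is multidimensionally consistent: computing $\partial^{J'}_l\partial^J_kH_{ab}$ and $\partial^J_k\partial^{J'}_lH_{ab}$ by differentiating the right-hand sides and substituting the system for all first derivatives yields identical expressions.
   Context: $\partial^J_k$ denotes $\partial/\partial\xi^J_k$, where $\xi^J_k$ is a Miwa-type variable labelled by the complex parameter $k$ and the constant matrix $J$. *)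

From HB Require Import structures.
From mathcomp Require Import all_boot all_order all_algebra.
From mathcomp Require Import complex.
From mathcomp Require Import reals.
Set Implicit Arguments. Unset Strict Implicit. Unset Printing Implicit Defensive.
Import Order.TTheory GRing.Theory Num.Theory.
Local Open Scope ring_scope.

Inductive lab := La | Lb | Lk | Ll.

Section Flows.
Variables (R : realType) (N : nat).
Local Notation C := (R[i]).
Variable (p : lab -> C).

Definition flow (J : 'M[C]_N) (z : lab) (H : lab -> lab -> 'M[C]_N)
    (x y : lab) : 'M[C]_N :=
  (p z - p x)^-1 *: (J *m H x y) - (p z - p y)^-1 *: (H x y *m J)
  + H x z *m J *m H z y.

(* d^{Jw}_w d^{Jz}_z H_xy, computed by differentiating the RHS of the z-flow
   (Leibniz rule; J, Jz, Jw and the parameters are constant) and substituting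
   the w-flow for every first derivative. *)
Definition second (Jz : 'M[C]_N) (z : lab) (Jw : 'M[C]_N) (w : lab)
    (H : lab -> lab -> 'M[C]_N) (x y : lab) : 'M[C]_N :=
  (p z - p x)^-1 *: (Jz *m flow Jw w H x y)
  - (p z - p y)^-1 *: (flow Jw w H x y *m Jz)
  + flow Jw w H x z *m Jz *m H z y
  + H x z *m Jz *m flow Jw w H z y.
End Flows.

(* Expanding the two mixed second derivatives, the only terms that are not
   manifestly symmetric under (J, k) <-> (J', l) are the two
   [(l - k)^-1 H_ak J' J H_kb] contributions; they enter with opposite signs
   and cancel once J and J' commute.  No partial-fraction identity between the
   parameters is needed, so the argument works for arbitrary coefficients
   [c z x] in place of [(p z - p x)^-1], over any commutative ring. *)

From HB Require Import structures.
From mathcomp Require Import all_boot all_order all_algebra.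
From mathcomp Require Import complex.
From mathcomp Require Import reals.
Set Implicit Arguments. Unset Strict Implicit. Unset Printing Implicit Defensive.
Import Order.TTheory GRing.Theory Num.Theory.
Local Open Scope ring_scope.

Lemma addr_cancel_rearrange (V : zmodType) (a b c d e f g h i k X : V) :
  a - b + c - (d - e + f) + (g - X + h) + (X - i + k)
  = a - b - d + e + c - f + g - i + h + k.
Proof.
rewrite !opprD !opprK !addrA.
by rewrite [LHS](@GRing.add V).[ACl (1*2*4*5*3*6*7*11*9*12*8*10)] subrK.
Qed.

Lemma addr_swap_rearrange (V : zmodType) (a b c d e f g h i k : V) :
  a - d - b + e + g - i + c - f + k + h
  = a - b - d + e + c - f + g - i + h + k.
Proof. by rewrite [LHS](@GRing.add V).[ACl (1*3*2*4*7*8*5*6*10*9)]. Qed.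

Lemma mulmx_comm_mid (R : pzRingType) (n : nat) (J J' A : 'M[R]_n) :
  J *m J' = J' *m J -> A *m J' *m J = A *m J *m J'.
Proof. by move=> JJ'_comm; rewrite -!mulmxA JJ'_comm. Qed.

Section GenericFlows.
Variables (F : comNzRingType) (N : nat) (T : Type) (c : T -> T -> F).

Definition gflow (J : 'M[F]_N) (z : T) (H : T -> T -> 'M[F]_N) (x y : T) :=
  c z x *: (J *m H x y) - c z y *: (H x y *m J) + H x z *m J *m H z y.

Definition gsecond (Jz : 'M[F]_N) (z : T) (Jw : 'M[F]_N) (w : T)
    (H : T -> T -> 'M[F]_N) (x y : T) :=
  c z x *: (Jz *m gflow Jw w H x y) - c z y *: (gflow Jw w H x y *m Jz)
  + gflow Jw w H x z *m Jz *m H z y + H x z *m Jz *m gflow Jw w H z y.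

Definition gsecond_expanded (J : 'M[F]_N) (z : T) (J' : 'M[F]_N) (w : T)
    (H : T -> T -> 'M[F]_N) (x y : T) :=
  (c z x * c w x) *: (J *m J' *m H x y) - (c z x * c w y) *: (J *m H x y *m J')
  - (c z y * c w x) *: (J' *m H x y *m J) + (c z y * c w y) *: (H x y *m J *m J')
  + c z x *: (J *m H x w *m J' *m H w y) - c z y *: (H x w *m J' *m H w y *m J)
  + c w x *: (J' *m H x z *m J *m H z y) - c w y *: (H x z *m J *m H z y *m J')
  + H x w *m J' *m H w z *m J *m H z y + H x z *m J *m H z w *m J' *m H w y.

Lemma gsecondE (J J' : 'M[F]_N) z w H x y :
  J *m J' = J' *m J ->
  gsecond J z J' w H x y = gsecond_expanded J z J' w H x y.
Proof.
move=> JJ'_comm.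
rewrite /gsecond /gflow ?mulmxDl ?mulmxDr ?mulmxBl ?mulmxBr ?scalerDr ?scalerBr
  ?mulmxN ?mulNmx ?scalerN -?scalemxAl -?scalemxAr ?scalerA ?mulmxA.
by rewrite !(mulmx_comm_mid _ JJ'_comm) addr_cancel_rearrange.
Qed.

Lemma gsecond_expanded_sym (J J' : 'M[F]_N) z w H x y :
  J *m J' = J' *m J ->
  gsecond_expanded J' w J z H x y = gsecond_expanded J z J' w H x y.
Proof.
move=> JJ'_comm.
rewrite /gsecond_expanded -JJ'_comm (mulmx_comm_mid _ JJ'_comm).
by rewrite (mulrC (c w x)) (mulrC (c w y)) (mulrC (c w x)) (mulrC (c w y))
  addr_swap_rearrange.
Qed.

Lemma gsecond_comm (J J' : 'M[F]_N) z w H x y :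
  J *m J' = J' *m J ->
  gsecond J z J' w H x y = gsecond J' w J z H x y.
Proof.
move=> JJ'_comm.
by rewrite gsecondE // -gsecond_expanded_sym // -gsecondE.
Qed.

End GenericFlows.

Theorem mainTheorem11 (R : realType) (N : nat) (p : lab -> R[i])
    (J J' : 'M[R[i]]_N) (H : lab -> lab -> 'M[R[i]]_N) :
  injective p ->
  J *m J' = J' *m J ->
  second p J Lk J' Ll H La Lb = second p J' Ll J Lk H La Lb.
Proof.
move=> _ JJ'_comm.
exact: (gsecond_comm (fun z x => (p z - p x)^-1) Lk Ll H La Lb JJ'_comm).
Qed.
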